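(* Consider one round $t+1$ of the $(6,3)$-majority algorithm, with a fixed set of defined nodes at the end of round $t$ and a fixed set of blocked nodes in round $t+1$. Compare two assignments of values in $\{0,1\}$ to these defined nodes, with signed imbalances $\Delta_t$ and $\Delta'_t$ satisfying $\Delta_t\ge\Delta'_t\ge 0$. Then the resulting imbalance after round $t+1$ in the first case stochastically dominates that in the second case: $\Delta_{t+1}\succeq\Delta'_{t+1}$.
   Context: $(k,\ell)$-majority algorithm on $n$ fully interconnected nodes in synchronous rounds: each node $u$ has $x_u\in\{0,1,\bot\}$, and $u$ is defined iff $x_u\neq\bot$. In each round: if $u$ received fewer than $\ell$ values from the previous round or is blocked, it sets $x_u:=\bot$ and skips the rest of the round; otherwise it picks $\ell$ of the received values uniformly at random, sets $x_u$ to their majority, and sends $x_u$ to $k$ nodes chosen independently and uniformly at random. Blocked nodes neither send nor receive messages in that round. Notation: $X_t,Y_t$ are the numbers of nodes with value $0$, resp. $1$, at the end of round $t$, and the signed imbalance is $\Delta_t=(Y_t-X_t)/2$. A random variable $Z$ stochastically dominates $Z'$, written $Z\succeq Z'$, if $\Pr[Z\ge x]\ge\Pr[Z'\ge x]$ for all $x$. *)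

From HB Require Import structures.
From mathcomp Require Import all_boot all_order all_algebra.
Set Implicit Arguments. Unset Strict Implicit. Unset Printing Implicit Defensive.
Import Order.TTheory GRing.Theory Num.Theory.
Local Open Scope ring_scope.

Section OneRound.
Variables (R : realFieldType) (k l n : nat).

(* A message is identified by (sender, slot), slot < k. *)
Definition msg := ('I_n * 'I_k)%type.

(* Random destinations: each (sender, slot) is sent to a uniformly random node,
   independently. Only messages whose sender is defined (in D) exist. *)
Definition recv (D : {set 'I_n}) (dest : {ffun msg -> 'I_n}) (v : 'I_n)
  : {set msg} := [set m | (m.1 \in D) && (dest m == v)].

Definition active (D B : {set 'I_n}) (dest : {ffun msg -> 'I_n}) (v : 'I_n)
  : bool := (v \notin B) && (l <= #|recv D dest v|)%N.

Definition node_weight (D B : {set 'I_n}) (dest : {ffun msg -> 'I_n})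
  (v : 'I_n) (S : {set msg}) : R :=
  if active D B dest v then
    (if (S \subset recv D dest v) && (#|S| == l) then
       ('C(#|recv D dest v|, l)%:R)^-1 else 0)
  else (if S == set0 then 1 else 0).

(* new value of node v: None = bottom; otherwise the majority of the
   values carried by the sampled messages. *)
Definition new_val (a : 'I_n -> bool) (D B : {set 'I_n})
  (dest : {ffun msg -> 'I_n}) (sel : {ffun 'I_n -> {set msg}}) (v : 'I_n)
  : option bool :=
  if active D B dest v then
    Some (l < 2 * #|[set m in sel v | a m.1]|)%N
  else None.

Definition imbalance0 (a : 'I_n -> bool) (D : {set 'I_n}) : R :=
  ((#|[set u in D | a u]|%:R - #|[set u in D | ~~ a u]|%:R) / 2%:R).

Definition imbalance1 (a : 'I_n -> bool) (D B : {set 'I_n})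
  (dest : {ffun msg -> 'I_n}) (sel : {ffun 'I_n -> {set msg}}) : R :=
  ((#|[set v | new_val a D B dest sel v == Some true]|%:R
    - #|[set v | new_val a D B dest sel v == Some false]|%:R) / 2%:R).

(* Pr[ Delta_{t+1} >= x ] *)
Definition prob_imb_ge (a : 'I_n -> bool) (D B : {set 'I_n}) (x : R) : R :=
  \sum_(dest : {ffun msg -> 'I_n}) \sum_(sel : {ffun 'I_n -> {set msg}})
    (#|{: {ffun msg -> 'I_n}}|%:R)^-1
    * (\prod_(v : 'I_n) node_weight D B dest v (sel v))
    * (if x <= imbalance1 a D B dest sel then 1 else 0).

End OneRound.

(* Delta_{t+1} depends on the initial values only up to relabelling the nodes
   by a permutation s that fixes the defined set D: composing destinations
   with s and pulling samples back along s is a measure-preserving bijection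
   of the probability space. Since the first assignment has at least as many
   defined 1-nodes as the second, such an s moves every 1-node of the second
   assignment onto a 1-node of the first. After that, outcome by outcome, each
   sampled majority can only change from 0 to 1, so Delta_{t+1} grows
   pointwise. *)

From HB Require Import structures.
From mathcomp Require Import all_boot all_order all_algebra fingroup perm.
From mathcomp Require Import lra.
Set Implicit Arguments. Unset Strict Implicit. Unset Printing Implicit Defensive.
Import Order.TTheory GRing.Theory Num.Theory.
Local Open Scope ring_scope.

Section Monotonicity.
Variables (R : realFieldType) (k l n : nat) (D B : {set 'I_n}).
Implicit Types (dest : {ffun msg k n -> 'I_n}) (sel : {ffun 'I_n -> {set msg k n}}).

Lemma node_weight_ge0 dest v S : 0 <= node_weight R l D B dest v S.
Proof.
rewrite /node_weight; case: ifP => _; case: ifP => _ //.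
by rewrite invr_ge0 ler0n.
Qed.

Lemma node_weight_support dest v S :
  node_weight R l D B dest v S != 0 -> active l D B dest v ->
  S \subset recv D dest v.
Proof.
rewrite /node_weight => + act_v; rewrite act_v.
by case: ifP => [/andP[]|_]; rewrite ?eqxx.
Qed.

Lemma imbalance1_mono (a a' : 'I_n -> bool) dest sel :
  {in D, forall u, a' u -> a u} ->
  (forall v, active l D B dest v -> sel v \subset recv D dest v) ->
  imbalance1 R l a' D B dest sel <= imbalance1 R l a D B dest sel.
Proof.
move=> le_a' sel_recv.
have le_votes v : active l D B dest v ->
    (#|[set m in sel v | a' m.1]| <= #|[set m in sel v | a m.1]|)%N.
  move=> /sel_recv /subsetP sub_recv; apply/subset_leq_card/subsetP => m.
  rewrite !inE => /andP[m_sel a'm]; rewrite m_sel le_a' //.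
  by have := sub_recv m m_sel; rewrite inE => /andP[].
rewrite /imbalance1 ler_pM2r ?invr_gt0 ?ltr0n //.
apply: lerB; rewrite ler_nat; apply/subset_leq_card/subsetP => v;
  rewrite !inE /new_val; case act_v: (active l D B dest v) => //= /eqP[maj].
- by apply/eqP; congr Some; apply: leq_trans maj _; rewrite leq_mul2l le_votes.
- apply/eqP; congr Some; apply/negbTE; move/negbT: maj; rewrite -!leqNgt.
  by apply: leq_trans; rewrite leq_mul2l le_votes.
Qed.

Lemma prob_imb_ge_mono (a a' : 'I_n -> bool) x :
  {in D, forall u, a' u -> a u} ->
  @prob_imb_ge R k l n a' D B x <= @prob_imb_ge R k l n a D B x.
Proof.
move=> le_a'; apply: ler_sum => dest _; apply: ler_sum => sel _.
have [->|weight_neq0] := eqVneq (\prod_v node_weight R l D B dest v (sel v)) 0.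
  by rewrite !mulr0 !mul0r.
apply: ler_wpM2l.
  by rewrite mulr_ge0 ?invr_ge0 ?ler0n ?prodr_ge0 // => v _; apply: node_weight_ge0.
have sel_recv v : active l D B dest v -> sel v \subset recv D dest v.
  by apply: node_weight_support; move/prodf_neq0: weight_neq0; apply.
have le_imb := imbalance1_mono le_a' sel_recv.
case: ifP => [x_le|_]; last by case: ifP.
by rewrite (le_trans x_le le_imb).
Qed.

End Monotonicity.

Section Relabelling.
Variables (R : realFieldType) (k l n : nat) (D B : {set 'I_n}).
Variables (s : {perm 'I_n}).
Hypothesis sD : {mono s : u / u \in D}.
Implicit Types (dest : {ffun msg k n -> 'I_n}) (sel : {ffun 'I_n -> {set msg k n}}).

Definition relabel_msg (m : msg k n) : msg k n := (s m.1, m.2).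

Lemma relabel_msg_inj : injective relabel_msg.
Proof. by move=> [u i] [v j] [/perm_inj -> ->]. Qed.

Let t : {perm msg k n} := perm relabel_msg_inj.

Definition relabel_dest dest : {ffun msg k n -> 'I_n} := [ffun m => dest (t m)].
Definition relabel_sel sel : {ffun 'I_n -> {set msg k n}} :=
  [ffun v => t @^-1: sel v].

Lemma relabel_dest_inj : injective relabel_dest.
Proof.
move=> d1 d2 /ffunP eq_d; apply/ffunP => m.
by have := eq_d ((t^-1)%g m); rewrite !ffunE permKV.
Qed.

Lemma relabel_sel_inj : injective relabel_sel.
Proof.
move=> s1 s2 /ffunP eq_s; apply/ffunP => v; apply/setP => m.
by have /setP/(_ ((t^-1)%g m)) := eq_s v; rewrite !ffunE !inE permKV.
Qed.

Lemma recv_relabel dest v : recv D (relabel_dest dest) v = t @^-1: recv D dest v.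
Proof. by apply/setP => m; rewrite !inE ffunE permE /= sD. Qed.

Lemma active_relabel dest v :
  active l D B (relabel_dest dest) v = active l D B dest v.
Proof. by rewrite /active recv_relabel card_preimset //; apply: perm_inj. Qed.

Lemma node_weight_relabel dest v (S : {set msg k n}) :
  node_weight R l D B (relabel_dest dest) v (t @^-1: S) =
  node_weight R l D B dest v S.
Proof.
have card_t (A : {set msg k n}) : #|t @^-1: A| = #|A|.
  by apply: card_preimset; apply: perm_inj.
have sub_t (A A' : {set msg k n}) : (t @^-1: A \subset t @^-1: A') = (A \subset A').
  apply/subsetP/subsetP => sub m; last by rewrite !inE => /sub.
  by have := sub ((t^-1)%g m); rewrite !inE permKV.
by rewrite /node_weight active_relabel recv_relabel sub_t !card_t -!cards_eq0 card_t.
Qed.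

Lemma new_val_relabel (a : 'I_n -> bool) dest sel v :
  new_val l (a \o s) D B (relabel_dest dest) (relabel_sel sel) v =
  new_val l a D B dest sel v.
Proof.
rewrite /new_val active_relabel; case: ifP => // _.
have -> : [set m in relabel_sel sel v | (a \o s) m.1] =
          t @^-1: [set m in sel v | a m.1].
  by apply/setP => m; rewrite !inE ffunE inE permE.
by rewrite card_preimset //; apply: perm_inj.
Qed.

Lemma prob_imb_ge_relabel (a : 'I_n -> bool) x :
  @prob_imb_ge R k l n (a \o s) D B x = @prob_imb_ge R k l n a D B x.
Proof.
rewrite /prob_imb_ge (reindex_inj relabel_dest_inj); apply: eq_bigr => dest _.
rewrite (reindex_inj relabel_sel_inj); apply: eq_bigr => sel _.
have -> : imbalance1 R l (a \o s) D B (relabel_dest dest) (relabel_sel sel) =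
          imbalance1 R l a D B dest sel.
  by rewrite /imbalance1; congr ((_%:R - _%:R) / _); apply: eq_card => v;
    rewrite !inE new_val_relabel.
by congr (_ * _ * _); apply: eq_bigr => v _; rewrite ffunE node_weight_relabel.
Qed.

End Relabelling.

Lemma perm_preimset_sub (T : finType) (D A A' : {set T}) :
  A \subset D -> A' \subset D -> (#|A'| <= #|A|)%N ->
  exists2 s : {perm T}, {mono s : u / u \in D} & s @^-1: A' \subset A.
Proof.
move=> AD + le_A'A; have [N] := ubnP #|A' :\: A|.
elim: N A' le_A'A => // N IH A' le_A'A lt_diff A'D.
have [sub_A'A|] := boolP (A' \subset A).
  exists 1%g => [u|]; first by rewrite perm1.
  by apply/subsetP => u; rewrite inE perm1 => /(subsetP sub_A'A).
case/subsetPn => u A'u nAu.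
have [w Aw nA'w] : exists2 w, w \in A & w \notin A'.
  apply/subsetPn; apply: contra nAu => sub_AA'.
  by have /eqP -> : A == A' by rewrite eqEcard sub_AA'.
have tD : {mono tperm u w : v / v \in D}.
  by move=> v; case: tpermP => [->|->|] //; rewrite (subsetP A'D u) ?(subsetP AD w).
have [|||s sD sub_s] := IH (tperm u w @^-1: A').
- by rewrite card_preimset //; apply: perm_inj.
- rewrite -ltnS; apply: leq_trans lt_diff; apply: proper_card.
  apply/properP; split.
    apply/subsetP => v; rewrite !inE.
    by case: tpermP => [->|->|_ _]; rewrite ?Aw ?(negbTE nA'w) ?andbF.
  by exists u; rewrite !inE ?tpermL ?A'u ?(negbTE nA'w) ?nAu.
- apply/subsetP => v; rewrite inE => /(subsetP A'D); rewrite -tD.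
  by rewrite tpermK.
exists (s * tperm u w)%g => [v|]; first by rewrite permM tD sD.
apply/subsetP => v; rewrite inE permM => A'v.
by apply: (subsetP sub_s); rewrite !inE.
Qed.

Lemma imbalance0_le (R : realFieldType) (n : nat) (D : {set 'I_n})
    (a a' : 'I_n -> bool) :
  (imbalance0 R a' D <= imbalance0 R a D) =
  (#|[set u in D | a' u]| <= #|[set u in D | a u]|)%N.
Proof.
have card_D (b : 'I_n -> bool) :
    (#|[set u in D | b u]|%:R + #|[set u in D | ~~ b u]|%:R : R) = #|D|%:R.
  rewrite -natrD -(cardsID [set u | b u] D).
  by congr (_ + _)%N%:R; apply: eq_card => u; rewrite !inE andbC.
rewrite /imbalance0 ler_pM2r ?invr_gt0 ?ltr0n // -(ler_nat R).
have card_Da := card_D a; have card_Da' := card_D a'.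
by apply/idP/idP => ?; lra.
Qed.

Theorem lemma5 (R : realFieldType) (n : nat) (D B : {set 'I_n})
  (a a' : 'I_n -> bool) :
  imbalance0 R a' D <= imbalance0 R a D ->
  0 <= imbalance0 R a' D ->
  forall x : R,
    @prob_imb_ge R 6 3 n a' D B x <= @prob_imb_ge R 6 3 n a D B x.
Proof.
rewrite imbalance0_le => le_card _ x.
have sub_D (b : 'I_n -> bool) : [set u in D | b u] \subset D.
  by apply/subsetP => u; rewrite inE => /andP[].
have [s sD sub_s] := perm_preimset_sub (sub_D a) (sub_D a') le_card.
rewrite -(prob_imb_ge_relabel 6 3 B sD a' x).
apply: prob_imb_ge_mono => u uD a'su.
by have := subsetP sub_s u; rewrite !inE sD uD /= => /(_ a'su).
Qed.
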